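(* Let $\phi=(\phi_i)_{i\ge1}$ and $\psi=(\psi_i)_{i\ge1}$ be sequences of real numbers with $\psi_i>-2$ for all $i\ge1$, and define $\mathcal{H}_0^{\phi,\psi}=1$ and, for $n\ge0$, $$\mathcal{H}_{n+1}^{\phi,\psi}(x)=2x\mathcal{H}_n^{\phi,\psi}(x)-(\mathcal{H}_n^{\phi,\psi})'(x)+(\phi_{n+1}+x\psi_{n+1})\mathcal{H}_n^{\phi,\psi}(x).$$ Assume that for some integer $n\ge2$ we have $\phi_{n-1}=\phi_n$ and $\psi_{n-1}=\psi_n$. Then $$\big(\mathcal{H}_{n-1}^{\phi,\psi}(x)\big)^2-\mathcal{H}_n^{\phi,\psi}(x)\mathcal{H}_{n-2}^{\phi,\psi}(x)>0\quad\text{for all }x\in\mathbb{R}.$$ *)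

From mathcomp Require Import all_boot all_order all_algebra.
From mathcomp Require Import reals.
Set Implicit Arguments. Unset Strict Implicit. Unset Printing Implicit Defensive.
Import Order.TTheory GRing.Theory Num.Theory.
Local Open Scope ring_scope.

(* The polynomials H_n^{phi,psi}; phi, psi : nat -> R are indexed from 1
   (the values phi 0, psi 0 are never used).
   H_0 = 1, H_{n+1} = 2 X H_n - H_n' + (phi_{n+1} + X psi_{n+1}) H_n. *)
Fixpoint Hpoly (R : realType) (phi psi : nat -> R) (n : nat) : {poly R} :=
  match n with
  | O => 1
  | S m => let h := Hpoly phi psi m in
           2%:R *: ('X * h) - h^`() + ((phi m.+1)%:P + psi m.+1 *: 'X) * h
  end.

From mathcomp Require Import all_boot all_order all_algebra.
From mathcomp Require Import reals.
From mathcomp Require Import polyrcf ring lra.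
Set Implicit Arguments. Unset Strict Implicit. Unset Printing Implicit Defensive.
Import Order.TTheory GRing.Theory Num.Theory.
Local Open Scope ring_scope.

(* Write H_{k+1} = C H_k with the creation operator C f = (a + s X) f - f',
   where a = phi_{k+1} and s = 2 + psi_{k+1} > 0.  Every H_k is a positive multiple
   of a polynomial with simple real roots: if f has simple roots r_1 < ... < r_m,
   then (C f)(r_j) = - f'(r_j) alternates in sign, and beyond the extreme roots
   C f has its signs at -oo and +oo, which gives m + 1 sign changes of C f.
   When the operators producing H_{n-1} and H_n coincide, with h = H_{n-2},
     H_{n-1}^2 - H_n H_{n-2} = (h'^2 - h h'') + s h^2.
   The Laguerre expression h'^2 - h h'' is nonnegative for real-rooted h and
   positive at its simple roots, and s h^2 > 0 away from them. *)

Section RealRootedness.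

Variable R : rcfType.
Implicit Types (a s x y : R) (rs ts : seq R) (f p : {poly R}).

Definition prodXsubC rs : {poly R} := \prod_(r <- rs) ('X - r%:P).

Definition creation a s f : {poly R} := (a%:P + s *: 'X) * f - f^`().

Lemma prodXsubC_neq0 rs : prodXsubC rs != 0.
Proof. by rewrite -size_poly_eq0 size_prod_XsubC. Qed.

Lemma sgr_horner_prodXsubC rs y : y \notin rs ->
  Num.sg (prodXsubC rs).[y] = (-1) ^+ count (fun r => y < r) rs.
Proof.
elim: rs => [|r rs IH]; first by rewrite /prodXsubC big_nil hornerC sgr1.
rewrite in_cons negb_or => /andP[yr /IH sgP].
rewrite /prodXsubC big_cons hornerM hornerXsubC sgrM -/(prodXsubC rs) sgP.
by rewrite sgrB yr mulr1n exprD.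
Qed.

Lemma deriv_prodXsubC_root rs r : r \in rs ->
  (prodXsubC rs)^`().[r] = (prodXsubC (rem r rs)).[r].
Proof.
move=> rs_r; rewrite /prodXsubC (perm_big _ (perm_to_rem rs_r)) big_cons.
by rewrite derivM derivXsubC mul1r hornerD hornerM hornerXsubC subrr mul0r addr0.
Qed.

Lemma sgr_deriv_prodXsubC_root rs r : uniq rs -> r \in rs ->
  Num.sg (prodXsubC rs)^`().[r] = (-1) ^+ count (fun t => r < t) rs.
Proof.
move=> uniq_rs rs_r.
rewrite deriv_prodXsubC_root // sgr_horner_prodXsubC ?mem_rem_uniqF //.
by rewrite (permP (perm_to_rem rs_r)) /= ltxx.
Qed.

Lemma Laguerre_prodXsubC rs x :
  0 <= (prodXsubC rs)^`().[x] ^+ 2 - (prodXsubC rs).[x] * (prodXsubC rs)^`()^`().[x].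
Proof.
elim: rs => [|r rs IH].
  by rewrite /prodXsubC big_nil !derivC !hornerC mulr0 subr0 sqr_ge0.
rewrite /prodXsubC big_cons -/(prodXsubC rs); set q := prodXsubC rs in IH *.
rewrite derivM derivXsubC mul1r derivD derivM derivXsubC mul1r.
rewrite !(hornerXsubC, hornerD, hornerM).
rewrite [X in 0 <= X](_ : _ = q.[x] ^+ 2
  + (x - r) ^+ 2 * (q^`().[x] ^+ 2 - q.[x] * q^`()^`().[x])); last by ring.
by rewrite addr_ge0 ?sqr_ge0 // mulr_ge0 ?sqr_ge0.
Qed.

Lemma creation_Turan a s f x :
  (creation a s f).[x] ^+ 2 - (creation a s (creation a s f)).[x] * f.[x]
  = f^`().[x] ^+ 2 - f.[x] * f^`()^`().[x] + s * f.[x] ^+ 2.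
Proof.
rewrite /creation !(derivD, derivB, derivN, derivM, derivZ, derivX, derivC).
rewrite !(hornerD, hornerN, hornerM, hornerZ, hornerX, hornerC).
ring.
Qed.

Lemma horner_creation_root a s f r : root f r ->
  (creation a s f).[r] = - f^`().[r].
Proof. by move=> /eqP fr; rewrite /creation hornerD hornerN hornerM fr mulr0 add0r. Qed.

Lemma sgr_creation_root a s c rs r : 0 < c -> uniq rs -> r \in rs ->
  Num.sg (creation a s (c *: prodXsubC rs)).[r] = (-1) ^+ (count (fun t => r < t) rs).+1.
Proof.
move=> c_gt0 uniq_rs rs_r; rewrite horner_creation_root; last first.
  by rewrite rootZ ?lt0r_neq0 // root_prod_XsubC.
rewrite derivZ hornerZ sgrN sgrM gtr0_sg // mul1r exprS mulN1r.
by rewrite sgr_deriv_prodXsubC_root.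
Qed.

Lemma size_lead_coef_creation a s f : s != 0 -> f != 0 ->
  size (creation a s f) = (size f).+1 /\ lead_coef (creation a s f) = s * lead_coef f.
Proof.
move=> s_neq0 f_neq0; rewrite /creation; set A := a%:P + s *: 'X.
have size_sX : size (s *: 'X : {poly R}) = 2 by rewrite size_scale ?size_polyX.
have size_C : (size (a%:P) < size (s *: 'X : {poly R}))%N.
  by rewrite size_sX ltnS size_polyC_leq1.
have size_A : size A = 2 by rewrite /A addrC size_polyDl.
have lead_A : lead_coef A = s by rewrite /A addrC lead_coefDl // lead_coefZ lead_coefX mulr1.
have A_neq0 : A != 0 by rewrite -size_poly_eq0 size_A.
have size_Af : size (A * f) = (size f).+1 by rewrite size_mul // size_A.
have size_der : (size (- f^`()) < size (A * f)%R)%N.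
  by rewrite size_polyN size_Af ltnS ltnW // lt_size_deriv.
by rewrite size_polyDl // lead_coefDl // lead_coefM lead_A size_Af.
Qed.

Lemma sgp_infty_beyond p rs : p != 0 ->
  exists b, [/\ 0 < b, {in rs, forall r, - b < r < b},
    Num.sg p.[- b] = sgp_minfty p & Num.sg p.[b] = sgp_pinfty p].
Proof.
(* a Cauchy bound of p * prodXsubC rs bounds rs and every root of p *)
move=> p_neq0; set q := p * prodXsubC rs.
have q_neq0 : q != 0 by rewrite mulf_neq0 ?prodXsubC_neq0.
have noroot_p y : ~~ root q y -> ~~ root p y by rewrite rootM negb_or => /andP[].
exists (cauchy_bound q); split; first exact: cauchy_bound_gt0.
- move=> r rs_r; rewrite -[_ < r < _]/(r \in `]_, _[).
  by apply: root_in_cauchy_bound; rewrite // unfold_in -/(root q r) rootM root_prod_XsubC rs_r orbT.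
- have noroot_left : {in `]-oo, - cauchy_bound q], forall y, ~~ root p y}.
    by move=> y /(le_cauchy_bound q_neq0); apply: noroot_p.
  by rewrite (sgp_minftyP noroot_left) ?bound_in_itv.
- have noroot_right : {in `[cauchy_bound q, +oo[, forall y, ~~ root p y}.
    by move=> y /(ge_cauchy_bound q_neq0); apply: noroot_p.
  by rewrite (sgp_pinftyP noroot_right) ?bound_in_itv.
Qed.

Lemma count_gt_path a ts : path <%R a ts -> count (fun r => a < r) (a :: ts) = size ts.
Proof.
move=> /lt_path_min/allP a_lt; rewrite /= ltxx add0n -[RHS]count_predT.
by apply: eq_in_count => y /a_lt.
Qed.

Lemma alternating_sign_roots p a ts : path <%R a ts ->
  {in a :: ts, forall y, Num.sg p.[y] = (-1) ^+ count (fun r => y < r) (a :: ts)} ->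
  exists ms, [/\ size ms = size ts, path <%R a ms & all (root p) ms].
Proof.
elim: ts a => [|b ts IH] a; first by exists [::].
move=> path_abts sgp; have /= /andP[ab path_bts] := path_abts.
have a_lt : {in b :: ts, forall y, a < y} by apply/allP; apply: lt_path_min.
have sgp_b : {in b :: ts, forall y,
    Num.sg p.[y] = (-1) ^+ count (fun r => y < r) (b :: ts)}.
  move=> y bts_y; rewrite sgp; last by rewrite in_cons bts_y orbT.
  by rewrite /= [y < a]ltNge ltW ?a_lt.
have [ms [size_ms path_bms root_ms]] := IH b path_bts sgp_b.
have sgn_change : p.[a] * p.[b] < 0.
  rewrite -sgr_lt0 sgrM sgp ?mem_head // sgp_b ?mem_head // !count_gt_path //.
  by rewrite exprS mulN1r mulNr -expr2 sqrr_sign oppr_lt0 ltr01.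
have [z] := poly_ivtoo (ltW ab) sgn_change; rewrite in_itv /= => /andP[az zb] root_z.
exists (z :: ms); split => /=; first by rewrite size_ms.
  rewrite az /=; move: path_bms; rewrite !lt_path_sortedE => /andP[/allP b_lt ->].
  by rewrite andbT; apply/allP => y /b_lt; apply: lt_trans zb.
by rewrite root_z.
Qed.

Lemma creation_prodXsubC a s c rs : 0 < s -> 0 < c -> sorted <%R rs ->
  exists2 ms, sorted <%R ms & creation a s (c *: prodXsubC rs) = (c * s) *: prodXsubC ms.
Proof.
move=> s_gt0 c_gt0 sorted_rs; set u := creation a s _.
have [size_u lead_u] : size u = (size rs).+2 /\ lead_coef u = c * s.
  have f_neq0 : c *: prodXsubC rs != 0 by rewrite scaler_eq0 negb_or gt_eqF ?prodXsubC_neq0.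
  have [-> ->] := size_lead_coef_creation a (lt0r_neq0 s_gt0) f_neq0.
  by rewrite size_scale ?lt0r_neq0 // size_prod_XsubC lead_coefZ lead_coef_prod_XsubC mulr1 mulrC.
have u_neq0 : u != 0 by rewrite -size_poly_eq0 size_u.
have [b [b_gt0 rs_in sgu_left sgu_right]] := sgp_infty_beyond rs u_neq0.
have cs_gt0 : 0 < c * s by rewrite mulr_gt0.
rewrite /sgp_minfty size_u lead_u sgrM sgrX sgrN1 (gtr0_sg cs_gt0) mulr1 in sgu_left.
rewrite /sgp_pinfty lead_u (gtr0_sg cs_gt0) in sgu_right.
set ts := rs ++ [:: b].
have path_ts : path <%R (- b) ts.
  rewrite cat_path lt_path_sortedE sorted_rs andbT /= andbT.
  apply/andP; split; first by apply/allP => r /rs_in /andP[].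
  by have := mem_last (- b) rs; rewrite in_cons => /predU1P[->|/rs_in /andP[] //]; lra.
have sgu : {in - b :: ts, forall y,
    Num.sg u.[y] = (-1) ^+ count (fun r => y < r) (- b :: ts)}.
  move=> y; rewrite in_cons mem_cat mem_seq1 => /or3P[/eqP->|rs_y|/eqP->].
  - by rewrite (count_gt_path path_ts) size_cat addn1.
  - have /andP[b_lt_y y_lt_b] := rs_in y rs_y.
    rewrite /= count_cat /= y_lt_b [y < - b]ltNge ltW //= add0n addn1.
    exact: sgr_creation_root (lt_sorted_uniq sorted_rs) rs_y.
  - rewrite (@eq_in_count _ _ pred0) ?count_pred0 ?expr0 // => r.
    rewrite in_cons mem_cat mem_seq1 => /or3P[/eqP->|/rs_in /andP[_ rb]|/eqP->];
      apply/negbTE; rewrite -leNgt //; lra.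
have [ms [size_ms path_ms root_ms]] := alternating_sign_roots path_ts sgu.
have sorted_ms := path_sorted path_ms.
exists ms => //; rewrite -lead_u; apply: all_roots_prod_XsubC => //.
  by rewrite size_u size_ms size_cat addn1.
by rewrite uniq_rootsE lt_sorted_uniq.
Qed.

Lemma creation_Turan_gt0 a s c rs f x : 0 < s -> c != 0 -> uniq rs ->
  f = c *: prodXsubC rs ->
  0 < (creation a s f).[x] ^+ 2 - (creation a s (creation a s f)).[x] * f.[x].
Proof.
move=> s_gt0 c_neq0 uniq_rs ->; rewrite creation_Turan !derivZ !hornerZ.
set P := prodXsubC rs.
rewrite [X in 0 < X](_ : _ = c ^+ 2 *
  (P^`().[x] ^+ 2 - P.[x] * P^`()^`().[x] + s * P.[x] ^+ 2)); last by ring.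
rewrite pmulr_rgt0 ?exprn_even_gt0 //.
have [Px0 | Px_neq0] := eqVneq P.[x] 0; last first.
  by rewrite ltr_wpDl ?Laguerre_prodXsubC // mulr_gt0 ?exprn_even_gt0.
(* a root of P is simple, so P' does not vanish there *)
have rs_x : x \in rs by rewrite -root_prod_XsubC; apply/rootP.
rewrite Px0 mul0r subr0 expr0n mulr0 addr0 exprn_even_gt0 // deriv_prodXsubC_root //.
by have := root_prod_XsubC (rem x rs) x; rewrite mem_rem_uniqF // => /negbT.
Qed.

End RealRootedness.

Section HermiteType.

Variables (R : realType) (phi psi : nat -> R).

Lemma Hpoly_creation k :
  Hpoly phi psi k.+1 = creation (phi k.+1) (2 + psi k.+1) (Hpoly phi psi k).
Proof. by rewrite /= /creation -!mul_polyC polyCD; ring. Qed.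

Hypothesis psi_gt : forall i : nat, (1 <= i)%N -> -2 < psi i.

Lemma Hpoly_real_rooted k :
  exists c rs, [/\ 0 < c, sorted <%R rs & Hpoly phi psi k = c *: prodXsubC rs].
Proof.
elim: k => [|k [c [rs [c_gt0 sorted_rs Hk]]]].
  by exists 1, [::]; rewrite /prodXsubC big_nil scale1r ltr01.
have s_gt0 : 0 < 2 + psi k.+1 by have := @psi_gt k.+1 isT; lra.
have [ms sorted_ms Hk1] := creation_prodXsubC (phi k.+1) s_gt0 c_gt0 sorted_rs.
by exists (c * (2 + psi k.+1)), ms; rewrite Hpoly_creation Hk Hk1 mulr_gt0.
Qed.

End HermiteType.

Theorem theorem3p4 (R : realType) (phi psi : nat -> R)
  (hpsi : forall i : nat, (1 <= i)%N -> -2 < psi i)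
  (n : nat) (hn : (2 <= n)%N)
  (hphi : phi n.-1 = phi n) (hpsi' : psi n.-1 = psi n) :
  forall x : R,
    0 < (Hpoly phi psi n.-1).[x] ^+ 2
        - (Hpoly phi psi n).[x] * (Hpoly phi psi n.-2).[x].
Proof.
move=> x; case: n hn hphi hpsi' => [|[|k]] // _.
rewrite -[k.+2.-1]/k.+1 -[k.+2.-2]/k => phi_eq psi_eq.
rewrite [Hpoly _ _ k.+2]Hpoly_creation -phi_eq -psi_eq Hpoly_creation.
have [c [rs [c_gt0 sorted_rs Hk]]] := Hpoly_real_rooted phi hpsi k.
apply: (creation_Turan_gt0 _ _ _ (lt0r_neq0 c_gt0) _ Hk).
  by have := hpsi k.+1 isT; lra.
exact: lt_sorted_uniq sorted_rs.
Qed.
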